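(* For all positive integers $k$, $s$ and $n$, $$\sum_{d\mid k}\bigl|c_d^{(s)}(n)\bigr| = 2^{\omega\left(\frac{k^s}{(k^s,n)_s}\right)}\,(k^s,n)_s .$$
   Context: For positive integers $a,b,s$, the generalized gcd $(a,b)_s$ is the largest $d^s$ ($d\in\mathbb{N}$) such that $d^s\mid a$ and $d^s\mid b$. The Cohen–Ramanujan sum is defined for positive integers $q,n,s$ by $$c_q^{(s)}(n)=\sum_{\substack{h=1\\ (h,q^s)_s=1}}^{q^s} e^{2\pi i n h/q^s}.$$ $\omega(m)$ denotes the number of distinct prime divisors of $m$ (so $\omega(1)=0$). *)

From mathcomp Require Import all_boot all_order all_algebra.
From mathcomp Require Import complex.
From mathcomp Require Import reals trigo.
Set Implicit Arguments. Unset Strict Implicit. Unset Printing Implicit Defensive.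
Import Order.TTheory GRing.Theory Num.Theory.

(* generalized gcd (a,b)_s : the largest d^s (d in N) dividing both a and b.
   For a > 0 any such d satisfies d <= a, so d ranges over 0..a. *)
Definition ggcd (s a b : nat) : nat :=
  \max_(d < a.+1 | (d ^ s %| a) && (d ^ s %| b)) d ^ s.

Definition omega (m : nat) : nat := size (primes m).

Local Open Scope ring_scope.
Local Open Scope complex_scope.

Definition expi (R : realType) (x : R) : R[i] := (cos x) +i* (sin x).

Definition cohen_ramanujan (R : realType) (s q n : nat) : R[i] :=
  \sum_(1 <= h < (q ^ s).+1 | ggcd s h (q ^ s) == 1%N)
     expi ((2 * pi * (n * h)%:R) / (q ^ s)%:R : R).

From mathcomp Require Import all_boot all_order all_algebra.
From mathcomp Require Import complex.
From mathcomp Require Import reals trigo.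
From mathcomp.algebra_tactics Require Import ring.
From mathcomp Require Import zify.
Import Order.TTheory GRing.Theory Num.Theory.
Set Implicit Arguments. Unset Strict Implicit.

(* Group the h in [1, r^s] by the value m^s = (h, r^s)_s, where m | r: the
   class of m contributes c_{r/m}^{(s)}(n), so summing a geometric series gives
   \sum_{d | r} c_d^{(s)}(n) = F(r) := r^s [r^s | n].  As F is multiplicative,
   c^{(s)}(n) is its Moebius inverse, the multiplicative integer function with
   c_{p^i}^{(s)}(n) = F(p^i) - F(p^{i-1}).  Then \sum_{d | k} |c_d^{(s)}(n)| is
   multiplicative as well, and at k = p^a, with v = floor(v_p(n) / s), the
   absolute values sum to p^{as} if a <= v and to 2 p^{vs} if a > v, which is
   the value of the right-hand side at p^a. *)

Lemma coprime_dvdn_split a b d : coprime a b -> d %| a * b ->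
  d = gcdn d a * gcdn d b.
Proof.
move=> cab dab; apply/eqP; rewrite eqn_dvd; apply/andP; split; last first.
  rewrite Gauss_dvd ?dvdn_gcdl //.
  exact: coprime_dvdl (dvdn_gcdr d a) (coprime_dvdr (dvdn_gcdr d b) cab).
have : d %| gcdn (gcdn d a * b) (gcdn d a * d).
  by rewrite dvdn_gcd [X in _ && X]dvdn_mull // muln_gcdl dvdn_gcd dab dvdn_mulr.
by rewrite -muln_gcdr (gcdnC b d).
Qed.

Lemma divisorsM a b : 0 < a -> 0 < b -> coprime a b ->
  perm_eq (divisors (a * b)) [seq x * y | x <- divisors a, y <- divisors b].
Proof.
move=> a0 b0 cab; apply: uniq_perm; first exact: divisors_uniq.
  apply: allpairs_uniq; [exact: divisors_uniq | exact: divisors_uniq |].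
  move=> [x1 y1] [x2 y2] /allpairsP[[u1 v1] /= [u1a v1b [-> ->]]].
  move=> /allpairsP[[u2 v2] /= [u2a v2b [-> ->]]] /= E.
  rewrite -!dvdn_divisors // in u1a v1b u2a v2b.
  have c12 : coprime u1 v2 by apply: (coprime_dvdl u1a); apply: (coprime_dvdr v2b).
  have c21 : coprime u2 v1 by apply: (coprime_dvdl u2a); apply: (coprime_dvdr v1b).
  have eu : u1 = u2.
    apply/eqP; rewrite eqn_dvd -(Gauss_dvdl _ c12) -E dvdn_mulr //=.
    by rewrite -(Gauss_dvdl _ c21) E dvdn_mulr.
  have u0 : 0 < u1 by apply: dvdn_gt0 u1a.
  by rewrite -eu; congr (_, _); apply/eqP; rewrite -(eqn_pmul2l u0) E eu.
move=> d; apply/idP/allpairsP.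
  rewrite -dvdn_divisors ?muln_gt0 ?a0 // => dab.
  exists (gcdn d a, gcdn d b); rewrite /= -!dvdn_divisors // !dvdn_gcdr.
  by split=> //; apply: coprime_dvdn_split.
move=> [[x y] /= [xa yb ->]]; rewrite -dvdn_divisors ?muln_gt0 ?a0 //.
by rewrite -!dvdn_divisors // in xa yb; apply: dvdn_mul.
Qed.

Lemma divisors_pfactor p a : prime p ->
  perm_eq (divisors (p ^ a)) [seq p ^ i | i <- iota 0 a.+1].
Proof.
move=> pp; apply: uniq_perm; first exact: divisors_uniq.
  by rewrite map_inj_uniq ?iota_uniq //; apply: expnI; apply: prime_gt1.
move=> d; rewrite -dvdn_divisors ?expn_gt0 ?prime_gt0 //.
apply/dvdn_pfactor/mapP => // [[m ma ->] | [m]].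
  by exists m => //; rewrite mem_iota.
by rewrite mem_iota add0n ltnS => ma ->; exists m.
Qed.

Lemma divisors_perm_div r : 0 < r ->
  perm_eq (divisors r) [seq r %/ m | m <- divisors r].
Proof.
move=> r0; apply: uniq_perm; first exact: divisors_uniq.
  rewrite map_inj_in_uniq ?divisors_uniq // => m1 m2.
  rewrite -!dvdn_divisors // => d1 d2 E.
  have q0 : 0 < r %/ m1 by rewrite divn_gt0 ?(dvdn_gt0 r0) // dvdn_leq.
  apply/eqP; rewrite -(eqn_pmul2l q0); apply/eqP.
  by rewrite {2}E mulnC divnK // mulnC divnK.
move=> d; apply/idP/mapP.
  rewrite -dvdn_divisors // => dr; exists (r %/ d).
    by rewrite -dvdn_divisors // dvdn_div.
  by rewrite divnA // mulKn // (dvdn_gt0 r0).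
by move=> [m mr ->]; rewrite -dvdn_divisors //; apply: dvdn_div; rewrite dvdn_divisors.
Qed.

Lemma dvdn_logn d a : 0 < d -> 0 < a ->
  (forall p, prime p -> logn p d <= logn p a) -> d %| a.
Proof.
move=> d0 a0 le_da; apply/dvdn_partP => // p; rewrite mem_primes => /and3P[pp _ _].
by rewrite p_part pfactor_dvdn // le_da.
Qed.

Lemma expn_lcm_dvdn s x y a : x ^ s %| a -> y ^ s %| a -> lcmn x y ^ s %| a.
Proof.
have [-> | s0] := posnP s; first by rewrite !expn0.
move=> xa ya; have [-> | a0] := posnP a; first exact: dvdn0.
have pos_root e : e ^ s %| a -> 0 < e.
  by rewrite lt0n; apply: contraTneq => ->; rewrite exp0n // dvd0n -lt0n.
have x0 := pos_root x xa; have y0 := pos_root y ya.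
apply: dvdn_logn => //; first by rewrite expn_gt0 lcmn_gt0 x0 y0.
move=> p pp; have := dvdn_leq_log p a0 xa; have := dvdn_leq_log p a0 ya.
by rewrite !lognX logn_lcm // maxnMr geq_max => -> ->.
Qed.

Section GeneralizedGcd.

Variable s : nat.
Hypothesis s_gt0 : 0 < s.

Definition is_ggcd_root a b D :=
  [/\ D ^ s %| a, D ^ s %| b & forall e, e ^ s %| a -> e ^ s %| b -> e %| D].

Lemma ggcd_root_exists a b : 0 < a ->
  exists2 D, is_ggcd_root a b D & ggcd s a b = D ^ s.
Proof.
move=> a0; rewrite /ggcd; set A := [pred d : 'I_a.+1 | (d ^ s %| a) && (d ^ s %| b)].
have A_gt0 : 0 < #|A|.
  by apply/card_gt0P; exists (Ordinal (a0 : 1 < a.+1)); rewrite inE /= exp1n !dvd1n.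
have [D AD DE] := eq_bigmax_cond (fun d : 'I_a.+1 => d ^ s) A_gt0; rewrite DE.
move: AD; rewrite inE => /andP[Da Db]; exists (val D) => //; split=> // e ea eb.
have La : lcmn e D ^ s %| a by apply: expn_lcm_dvdn.
have Lb : lcmn e D ^ s %| b by apply: expn_lcm_dvdn.
have L0 : 0 < lcmn e D.
  by have := dvdn_gt0 a0 La; rewrite expn_gt0 eqn0Ngt s_gt0 orbF.
have L_le_a : lcmn e D < a.+1.
  rewrite ltnS; apply: leq_trans (dvdn_leq a0 La).
  by rewrite -{1}(expn1 (lcmn e D)) leq_pexp2l.
have := @leq_bigmax_cond _ A (fun d : 'I_a.+1 => d ^ s) (Ordinal L_le_a).
rewrite inE /= La Lb DE => /(_ isT); rewrite leq_exp2r // => L_le_D.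
have -> : val D = lcmn e D by apply/eqP; rewrite eqn_leq L_le_D dvdn_leq ?dvdn_lcmr.
exact: dvdn_lcml.
Qed.

Lemma ggcd_rootE a b D : 0 < a -> is_ggcd_root a b D -> ggcd s a b = D ^ s.
Proof.
move=> a0 [Da Db DM]; have [E [Ea Eb EM] ->] := ggcd_root_exists b a0.
by congr (_ ^ _); apply/eqP; rewrite eqn_dvd EM ?DM.
Qed.

Lemma ggcd_dvdl a b : 0 < a -> ggcd s a b %| a.
Proof. by move=> a0; have [D [] ? _ _ ->] := ggcd_root_exists b a0. Qed.

Lemma ggcd1n b : ggcd s 1 b = 1.
Proof.
rewrite -{2}(exp1n s); apply: ggcd_rootE; split; rewrite ?exp1n ?dvd1n // => e.
by rewrite -{1}(exp1n s) dvdn_pexp2r.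
Qed.

Lemma ggcd_pmul2l x a b : 0 < x -> 0 < a ->
  ggcd s (x ^ s * a) (x ^ s * b) = x ^ s * ggcd s a b.
Proof.
move=> x0 a0; have [D [Da Db DM] ->] := ggcd_root_exists b a0.
have xs0 : 0 < x ^ s by rewrite expn_gt0 x0.
rewrite -expnMn; apply: ggcd_rootE; first by rewrite muln_gt0 xs0.
split; rewrite ?expnMn ?dvdn_pmul2l // => e ea eb.
have [t Lt] := dvdnP (dvdn_lcmr e x).
have La := expn_lcm_dvdn ea (dvdn_mulr a (dvdnn (x ^ s))).
have Lb := expn_lcm_dvdn eb (dvdn_mulr b (dvdnn (x ^ s))).
rewrite Lt expnMn mulnC dvdn_pmul2l // in La.
rewrite Lt expnMn mulnC dvdn_pmul2l // in Lb.
by apply: dvdn_trans (dvdn_lcml e x) _; rewrite Lt mulnC dvdn_pmul2l // DM.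
Qed.

Lemma ggcd_coprimeM x y b : 0 < x -> 0 < y -> coprime x y ->
  ggcd s ((x * y) ^ s) b = ggcd s (x ^ s) b * ggcd s (y ^ s) b.
Proof.
move=> x0 y0 cxy; have xs0 : 0 < x ^ s by rewrite expn_gt0 x0.
have ys0 : 0 < y ^ s by rewrite expn_gt0 y0.
have [Dx [Dxx Dxb DxM] ->] := ggcd_root_exists b xs0.
have [Dy [Dyy Dyb DyM] ->] := ggcd_root_exists b ys0.
rewrite dvdn_pexp2r // in Dxx; rewrite dvdn_pexp2r // in Dyy.
rewrite -expnMn; apply: ggcd_rootE; first by rewrite expnMn muln_gt0 xs0.
split=> [|| e exy eb]; rewrite ?expnMn.
- by apply: dvdn_mul; apply: dvdn_exp2r.
- rewrite Gauss_dvd ?Dxb //; apply/coprimeXl/coprimeXr.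
  exact: coprime_dvdl Dxx (coprime_dvdr Dyy cxy).
rewrite dvdn_pexp2r // in exy; rewrite (coprime_dvdn_split cxy exy).
have e_dvd_b f : f %| e -> f ^ s %| b by move=> fe; apply: dvdn_trans eb; apply: dvdn_exp2r.
by rewrite dvdn_mul ?DxM ?DyM ?e_dvd_b ?dvdn_gcdl ?dvdn_exp2r ?dvdn_gcdr.
Qed.

Lemma ggcd_pfactor p a b : 0 < b -> prime p ->
  ggcd s ((p ^ a) ^ s) b = p ^ (minn a (logn p b %/ s) * s).
Proof.
move=> b0 pp; rewrite expnM; apply: ggcd_rootE.
- by rewrite !expn_gt0 prime_gt0.
split=> [|| e ea eb].
- by apply: dvdn_exp2r; apply: dvdn_exp2l; apply: geq_minl.
- by rewrite -expnM pfactor_dvdn // -leq_divRL // geq_minr.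
rewrite dvdn_pexp2r // in ea; have [j ja e_pj] := dvdn_pfactor _ _ pp ea.
rewrite e_pj -expnM pfactor_dvdn // -leq_divRL // in eb *.
by rewrite dvdn_exp2l // leq_min ja.
Qed.

End GeneralizedGcd.

Lemma primes_coprimeM a b : 0 < a -> 0 < b -> coprime a b ->
  perm_eq (primes (a * b)) (primes a ++ primes b).
Proof.
move=> a0 b0 cab; apply: uniq_perm; last by move=> p; rewrite primesM // mem_cat.
  exact: primes_uniq.
rewrite cat_uniq !primes_uniq andbT /=; apply/hasPn => p.
rewrite !mem_primes => /and3P[pp _ pb]; apply/negP => /and3P[_ _ pa].
by have := coprime_dvdl pa cab; rewrite prime_coprime // pb.
Qed.

Lemma omega_coprimeM a b : 0 < a -> 0 < b -> coprime a b ->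
  omega (a * b) = omega a + omega b.
Proof. by move=> a0 b0 cab; rewrite /omega -size_cat; apply/perm_size/primes_coprimeM. Qed.

Lemma omega_pfactor p e : prime p -> omega (p ^ e) = (0 < e).
Proof. by move=> pp; case: e => [|e]; rewrite ?expn0 // /omega primesX // primes_prime. Qed.

Local Open Scope ring_scope.

Section Multiplicative.

Variable R : comPzSemiRingType.

Definition arith_multiplicative (f : nat -> R) :=
  f 1%N = 1 /\
  forall x y, (0 < x)%N -> (0 < y)%N -> coprime x y -> f (x * y)%N = f x * f y.

Lemma eq_arith_multiplicative f g :
  arith_multiplicative f -> arith_multiplicative g ->
  (forall p a, prime p -> f (p ^ a)%N = g (p ^ a)%N) ->
  forall r, (0 < r)%N -> f r = g r.
Proof.
move=> [f1 fM] [g1 gM] fg; elim/ltn_ind=> r IH r0.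
have [r_le1 | r_gt1] := leqP r 1.
  have -> : r = 1%N by apply/eqP; rewrite eqn_leq r_le1.
  by rewrite f1 g1.
have p_pr := pdiv_prime r_gt1; set p := pdiv r in p_pr *.
have rp'_lt : (r`_p^' < r)%N.
  rewrite -{2}(partnC p r0) ltn_Pmull ?part_gt0 // p_part -(expn0 p) ltn_exp2l ?prime_gt1 //.
  by rewrite logn_gt0 mem_primes p_pr r0 pdiv_dvd.
by rewrite -(partnC p r0) fM ?gM ?part_gt0 ?coprime_partC // p_part fg // IH ?part_gt0.
Qed.

Definition prod_primes (g : nat -> nat -> R) (r : nat) : R :=
  \prod_(p <- primes r) g p (logn p r).

Lemma prod_primes_multiplicative g :
  (forall p, g p 0%N = 1) -> arith_multiplicative (prod_primes g).
Proof.
move=> g0; split=> [|x y x0 y0 cxy]; first by rewrite /prod_primes big_nil.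
rewrite /prod_primes (perm_big _ (primes_coprimeM x0 y0 cxy)) big_cat /=.
have cyx : coprime y x by rewrite coprime_sym.
congr (_ * _); apply: eq_big_seq => p; rewrite mem_primes => /and3P[pp _ pdvd].
  by rewrite lognM // (logn_coprime (coprime_dvdl pdvd cxy)) addn0.
by rewrite lognM // (logn_coprime (coprime_dvdl pdvd cyx)).
Qed.

Lemma prod_primes_pfactor g p a :
  g p 0%N = 1 -> prime p -> prod_primes g (p ^ a) = g p a.
Proof.
move=> gp0 pp; case: a => [|a]; first by rewrite expn0 /prod_primes big_nil.
by rewrite /prod_primes primesX // primes_prime // big_seq1 pfactorK.
Qed.

Lemma sum_divisors_multiplicative f : arith_multiplicative f ->
  arith_multiplicative (fun r => \sum_(d <- divisors r) f d).
Proof.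
move=> [f1 fM]; split=> [|x y x0 y0 cxy]; first by rewrite big_seq1.
rewrite (perm_big _ (divisorsM x0 y0 cxy)) big_allpairs_dep big_distrl /=.
apply: eq_big_seq => u; rewrite -dvdn_divisors // => ux.
rewrite big_distrr /=; apply: eq_big_seq => v; rewrite -dvdn_divisors // => vy.
rewrite fM ?(dvdn_gt0 x0 ux) ?(dvdn_gt0 y0 vy) //.
exact: coprime_dvdl ux (coprime_dvdr vy cxy).
Qed.

End Multiplicative.

Lemma sum_divisors_pfactor (V : nmodType) (F : nat -> V) p a : prime p ->
  \sum_(d <- divisors (p ^ a)) F d = \sum_(i < a.+1) F (p ^ i)%N.
Proof.
move=> pp; rewrite (perm_big _ (divisors_pfactor a pp)) big_map.
by rewrite -(big_mkord xpredT (fun i => F (p ^ i)%N)) /index_iota subn0.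
Qed.

Lemma eq_divisor_sums (V : zmodType) (f g : nat -> V) :
  (forall r, (0 < r)%N -> \sum_(d <- divisors r) f d = \sum_(d <- divisors r) g d) ->
  forall r, (0 < r)%N -> f r = g r.
Proof.
move=> fg; elim/ltn_ind=> r IH r0; have := fg r r0.
rewrite !(bigD1_seq r (divisors_id r0) (divisors_uniq r)) /=.
suff -> : \sum_(d <- divisors r | d != r) f d = \sum_(d <- divisors r | d != r) g d.
  by move/addIr.
rewrite big_seq_cond [RHS]big_seq_cond; apply: eq_bigr => d /andP[].
rewrite -dvdn_divisors // => dr dnr.
by rewrite IH ?(dvdn_gt0 r0 dr) // ltn_neqAle dnr dvdn_leq.
Qed.

Section IntegerModel.

Variables s n : nat.

Definition pow_if_dvd (r : nat) : int := (r ^ s)%:Z *+ (r ^ s %| n)%N.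

(* Moebius inversion of [pow_if_dvd] at a prime power *)
Definition cr_pfactor (p i : nat) : int :=
  pow_if_dvd (p ^ i) - (if i is j.+1 then pow_if_dvd (p ^ j) else 0).

Definition cr_int : nat -> int := prod_primes cr_pfactor.

Lemma pow_if_dvd_multiplicative : arith_multiplicative pow_if_dvd.
Proof.
split=> [|x y _ _ cxy]; first by rewrite /pow_if_dvd exp1n dvd1n.
rewrite /pow_if_dvd expnMn Gauss_dvd; last exact/coprimeXl/coprimeXr.
by case: (x ^ s %| n)%N; case: (y ^ s %| n)%N; rewrite ?mulr0n ?mul0r ?mulr0 // PoszM.
Qed.

Lemma pow_if_dvd_pfactor p a : (0 < s)%N -> (0 < n)%N -> prime p ->
  pow_if_dvd (p ^ a) = (p ^ (a * s))%:Z *+ (a <= logn p n %/ s)%N.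
Proof. by move=> s0 n0 pp; rewrite /pow_if_dvd -expnM pfactor_dvdn // leq_divRL. Qed.

Lemma cr_pfactor0 p : cr_pfactor p 0 = 1.
Proof. by rewrite /cr_pfactor subr0 /pow_if_dvd exp1n dvd1n. Qed.

Lemma cr_int_multiplicative : arith_multiplicative cr_int.
Proof. exact/prod_primes_multiplicative/cr_pfactor0. Qed.

Lemma cr_int_pfactor p a : prime p -> cr_int (p ^ a) = cr_pfactor p a.
Proof. exact/prod_primes_pfactor/cr_pfactor0. Qed.

Lemma sum_cr_pfactor p a : \sum_(i < a.+1) cr_pfactor p i = pow_if_dvd (p ^ a).
Proof.
elim: a => [|a IH]; first by rewrite big_ord1 cr_pfactor0 /pow_if_dvd exp1n dvd1n.
by rewrite big_ord_recr /= IH addrC subrK.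
Qed.

Lemma sum_cr_int r : (0 < r)%N -> \sum_(d <- divisors r) cr_int d = pow_if_dvd r.
Proof.
apply: (@eq_arith_multiplicative _ (fun r => \sum_(d <- divisors r) cr_int d)).
- exact/sum_divisors_multiplicative/cr_int_multiplicative.
- exact: pow_if_dvd_multiplicative.
move=> p a pp; rewrite sum_divisors_pfactor // -sum_cr_pfactor.
by apply: eq_bigr => i _; rewrite cr_int_pfactor.
Qed.

End IntegerModel.

Section AbsoluteSum.

Variables s n : nat.
Hypotheses (s_gt0 : (0 < s)%N) (n_gt0 : (0 < n)%N).

Definition ggcd_weight (k : nat) : nat :=
  2 ^ omega (k ^ s %/ ggcd s (k ^ s) n) * ggcd s (k ^ s) n.

Lemma ggcd_weight_multiplicative : arith_multiplicative (fun k => (ggcd_weight k)%:Z).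
Proof.
split=> [|x y x0 y0 cxy]; first by rewrite /ggcd_weight exp1n ggcd1n // divn1.
have xs0 : (0 < x ^ s)%N by rewrite expn_gt0 x0.
have ys0 : (0 < y ^ s)%N by rewrite expn_gt0 y0.
rewrite /ggcd_weight ggcd_coprimeM // -PoszM; congr Posz.
have gx := ggcd_dvdl s_gt0 n xs0; have gy := ggcd_dvdl s_gt0 n ys0.
set gx' := ggcd s (x ^ s) n in gx *; set gy' := ggcd s (y ^ s) n in gy *.
have gx0 : (0 < gx')%N := dvdn_gt0 xs0 gx.
have gy0 : (0 < gy')%N := dvdn_gt0 ys0 gy.
rewrite expnMn -{1}(divnK gx) -{1}(divnK gy) mulnACA mulnK ?muln_gt0 ?gx0 //.
have qx0 : (0 < x ^ s %/ gx')%N by rewrite divn_gt0 // dvdn_leq.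
have qy0 : (0 < y ^ s %/ gy')%N by rewrite divn_gt0 // dvdn_leq.
have cq : coprime (x ^ s %/ gx') (y ^ s %/ gy').
  apply: coprime_dvdl (dvdn_div gx) (coprime_dvdr (dvdn_div gy) _).
  exact/coprimeXl/coprimeXr.
by rewrite omega_coprimeM // expnD mulnACA.
Qed.

Lemma ggcd_weight_pfactor p a : prime p ->
  ggcd_weight (p ^ a) = (2 ^ (logn p n %/ s < a) * p ^ (minn a (logn p n %/ s) * s))%N.
Proof.
move=> pp; rewrite /ggcd_weight ggcd_pfactor // -expnM.
have le_min : (minn a (logn p n %/ s) * s <= a * s)%N by rewrite leq_mul2r geq_minl orbT.
rewrite -expnB ?prime_gt0 // omega_pfactor // subn_gt0 ltn_mul2r s_gt0.
by rewrite gtn_min ltnn.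
Qed.

Lemma sum_abs_cr_pfactor p a : prime p ->
  \sum_(i < a.+1) `|cr_pfactor s n p i| =
  (2 ^ (logn p n %/ s < a) * p ^ (minn a (logn p n %/ s) * s))%N%:Z.
Proof.
move=> pp; set w := (logn p n %/ s)%N.
elim: a => [|a IH]; first by rewrite big_ord1 cr_pfactor0 /= min0n.
rewrite big_ord_recr /= IH /cr_pfactor !pow_if_dvd_pfactor // -/w.
case: (leqP a.+1 w) => h.
  have -> : (w < a)%N = false by rewrite ltnNge (ltnW h).
  rewrite (ltnW h) /= !mulr1n (minn_idPl (ltnW h)) !mul1n.
  rewrite ger0_norm; first by rewrite addrC subrK.
  by rewrite subr_ge0 lez_nat leq_pexp2l ?prime_gt0 // leq_mul2r leqnSn orbT.
case: (leqP a w) => h2.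
  have aw : a = w by apply/eqP; rewrite eqn_leq h2 -ltnS.
  rewrite /= mulr0n mulr1n sub0r normrN ger0_norm //.
  by rewrite -aw -PoszD expn0 expn1 mul1n mul2n -addnn.
by rewrite /= !mulr0n subrr normr0 addr0.
Qed.

Lemma sum_abs_cr_int k : (0 < k)%N ->
  \sum_(d <- divisors k) `|cr_int s n d| = (ggcd_weight k)%:Z.
Proof.
apply: (@eq_arith_multiplicative _ (fun k => \sum_(d <- divisors k) `|cr_int s n d|)
  (fun k => (ggcd_weight k)%:Z)).
- apply: sum_divisors_multiplicative; have [cr1 crM] := cr_int_multiplicative s n.
  by split=> [|x y x0 y0 cxy]; rewrite ?cr1 ?crM ?normrM.
- exact: ggcd_weight_multiplicative.
move=> p a pp; rewrite sum_divisors_pfactor // ggcd_weight_pfactor // -sum_abs_cr_pfactor //.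
by apply: eq_bigr => i _; rewrite cr_int_pfactor.
Qed.

End AbsoluteSum.

Section UnitCircle.

Variable R : realType.

Lemma expiD (x y : R) : expi (x + y) = expi x * expi y.
Proof. by rewrite /expi cosD sinD /=; congr (_ +i* _)%C; rewrite addrC. Qed.

Lemma expiMn (x : R) k : expi (x *+ k) = expi x ^+ k.
Proof.
elim: k => [|k IH]; first by rewrite mulr0n /expi cos0 sin0.
by rewrite mulrS expiD IH exprS.
Qed.

Lemma expi_2pi_nat k : expi (2 * pi * k%:R : R) = 1.
Proof.
rewrite mulr_natr expiMn -[2]/(1 + 1) mulrDl mul1r -mulr2n /expi cos2pi sin2pi.
by rewrite expr1n.
Qed.

Lemma expi_neq1 (x : R) : 0 < x -> x < 2 * pi -> expi x != 1.
Proof.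
move=> x0 x2; apply/eqP; rewrite /expi => -[cx sx].
case: (ltrgtP x pi) => h.
- by move: (@sin_gt0_pi _ x); rewrite x0 h sx ltxx => /(_ isT).
- have h1 : 0 < x - pi < pi.
    by rewrite subr_gt0 h /= ltrBlDr -[pi + pi]mulr2n -mulr_natl.
  move: (sin_gt0_pi h1); rewrite -[sin _]opprK -sinDpi subrK sx oppr0.
  by rewrite ltxx.
- by move: cx; rewrite h cospi => /eqP; rewrite eq_sym -subr_eq0 opprK -[1 + 1]/2 pnatr_eq0.
Qed.

Lemma sum_roots_of_unity (M n : nat) : (0 < M)%N ->
  \sum_(1 <= h < M.+1) expi ((2 * pi * (n * h)%:R) / M%:R : R) = (M * (M %| n))%:R.
Proof.
move=> M0; have MR : (M%:R : R) != 0 by rewrite pnatr_eq0 -lt0n.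
set y : R := (2 * pi * n%:R) / M%:R.
have termE h : (2 * pi * (n * h)%:R) / M%:R = y *+ h.
  by rewrite /y -mulr_natr natrM; ring.
rewrite big_add1 /= big_mkord; under eq_bigr do rewrite termE expiMn.
case: (boolP (M %| n)%N) => [/dvdnP[q nq] | ndvd].
  have -> : expi y = 1 by rewrite /y nq natrM mulrA -mulrA mulfV // mulr1 expi_2pi_nat.
  by under eq_bigr do rewrite expr1n; rewrite sumr_const card_ord muln1.
have yM : expi y ^+ M = 1.
  by rewrite -expiMn -mulr_natr /y mulrAC -mulrA mulfV // mulr1 expi_2pi_nat.
have y1 : expi y != 1.
  have r0 : (0 < n %% M)%N by rewrite lt0n.
  have -> : y = 2 * pi * (n %/ M)%:R + 2 * pi * (n %% M)%:R / M%:R.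
    by rewrite /y {1}(divn_eq n M) natrD natrM; field.
  rewrite expiD expi_2pi_nat mul1r; apply: expi_neq1.
    by rewrite divr_gt0 ?ltr0n // mulr_gt0 ?ltr0n // mulr_gt0 ?pi_gt0.
  by rewrite ltr_pdivrMr ?ltr0n // ltr_pM2l ?ltr_nat ?ltn_mod // mulr_gt0 ?pi_gt0.
under eq_bigr do rewrite exprS.
rewrite -big_distrr /= muln0.
have : (expi y - 1) * \sum_(i < M) expi y ^+ i = 0 by rewrite -subrX1 yM subrr.
by move/eqP; rewrite mulf_eq0 subr_eq0 (negbTE y1) /= => /eqP ->; rewrite mulr0.
Qed.

End UnitCircle.

Lemma sum_range_multiples (V : nmodType) (F : nat -> V) M t : (0 < M)%N ->
  (forall h, ~~ (M %| h)%N -> F h = 0) ->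
  \sum_(1 <= h < (M * t).+1) F h = \sum_(1 <= j < t.+1) F (M * j)%N.
Proof.
move=> M0 FM; elim: t => [|t IH]; first by rewrite muln0 !big_geq.
rewrite (big_cat_nat _ (n := (M * t).+1)) //=; last by rewrite ltnS leq_mul2l leqnSn orbT.
rewrite IH [RHS]big_nat_recr //=; congr (_ + _).
rewrite mulnS addnC big_nat_recr /=; last by lia.
rewrite big_nat_cond big1 ?add0r // => h /andP[/andP[h1 h2] _].
apply: FM; apply/negP => /dvdnP[q hq].
rewrite hq [(q * M)%N]mulnC ltn_mul2l M0 /= in h1.
rewrite hq [(q * M)%N]mulnC addnC -mulnS ltn_mul2l M0 /= ltnS in h2.
by move: (leq_ltn_trans h2 h1); rewrite ltnn.
Qed.

Section CohenRamanujan.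

Variables (R : realType) (s : nat).
Hypothesis s_gt0 : (0 < s)%N.

Lemma sum_ggcd_class r m n : (0 < r)%N -> (m %| r)%N ->
  \sum_(1 <= h < (r ^ s).+1 | ggcd s h (r ^ s) == (m ^ s)%N)
     expi ((2 * pi * (n * h)%:R) / (r ^ s)%:R : R) =
  cohen_ramanujan R s (r %/ m) n.
Proof.
move=> r0 mr; have m0 : (0 < m)%N := dvdn_gt0 r0 mr.
have ms0 : (0 < m ^ s)%N by rewrite expn_gt0 m0.
have qs0 : (0 < (r %/ m) ^ s)%N by rewrite expn_gt0 divn_gt0 // dvdn_leq.
have rE : (r ^ s = m ^ s * (r %/ m) ^ s)%N by rewrite -expnMn mulnC divnK.
rewrite big_mkcond /= rE sum_range_multiples //; last first.
  move=> h; case: eqP => // hE; apply: contraNeq => _.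
  have [-> | h0] := posnP h; first exact: dvdn0.
  by rewrite -hE ggcd_dvdl.
rewrite /cohen_ramanujan [RHS]big_mkcond /=; apply: eq_big_nat => j /andP[j0 _].
rewrite ggcd_pmul2l // -{2}(muln1 (m ^ s)%N) eqn_pmul2l //.
case: (_ == 1)%N => //; congr (expi _).
rewrite !natrM; field.
by rewrite !pnatr_eq0 -!lt0n ms0 qs0.
Qed.

Lemma sum_divisors_ggcd_class (V : zmodType) h r (E : V) : (0 < h)%N -> (0 < r)%N ->
  \sum_(m <- divisors r | ggcd s h (r ^ s) == (m ^ s)%N) E = E.
Proof.
move=> h0 r0; have [D [_ Dr _] ->] := ggcd_root_exists s_gt0 (r ^ s) h0.
have Din : D \in divisors r by rewrite -dvdn_divisors // -(dvdn_pexp2r _ _ s_gt0).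
rewrite big_mkcond /= (bigD1_seq D Din (divisors_uniq r)) /= eqxx.
by rewrite big1 ?addr0 // => m /negbTE mD; rewrite eqn_exp2r // eq_sym mD.
Qed.

Lemma sum_cohen_ramanujan n r : (0 < r)%N ->
  \sum_(d <- divisors r) cohen_ramanujan R s d n = (pow_if_dvd s n r)%:~R.
Proof.
move=> r0; have rs0 : (0 < r ^ s)%N by rewrite expn_gt0 r0.
have -> : pow_if_dvd s n r = (r ^ s * (r ^ s %| n))%N.
  by rewrite /pow_if_dvd; case: (_ %| _)%N; rewrite ?muln1 ?muln0.
rewrite -pmulrn -(sum_roots_of_unity R n rs0).
rewrite (perm_big _ (divisors_perm_div r0)) big_map /=.
(* every h in [1, r^s] lies in exactly one class ggcd s h (r^s) = m^s, m | r *)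
transitivity (\sum_(m <- divisors r)
  \sum_(1 <= h < (r ^ s).+1 | ggcd s h (r ^ s) == (m ^ s)%N)
     expi ((2 * pi * (n * h)%:R) / (r ^ s)%:R : R)).
  by apply: eq_big_seq => m; rewrite -dvdn_divisors // => mr; rewrite sum_ggcd_class.
rewrite (exchange_big_dep xpredT) //=.
by apply: eq_big_nat => h /andP[h0 _]; apply: sum_divisors_ggcd_class.
Qed.

Lemma cohen_ramanujan_int n r : (0 < r)%N ->
  cohen_ramanujan R s r n = (cr_int s n r)%:~R.
Proof.
apply: (@eq_divisor_sums _ (fun r => cohen_ramanujan R s r n) (fun r => (cr_int s n r)%:~R)).
by move=> q q0; rewrite sum_cohen_ramanujan // -(sum_cr_int s n q0) rmorph_sum.
Qed.

End CohenRamanujan.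

Theorem theorem3 (R : realType) (k s n : nat) :
  (0 < k)%N -> (0 < s)%N -> (0 < n)%N ->
  \sum_(d <- divisors k) `|cohen_ramanujan R s d n|
    = ((2 ^ omega ((k ^ s) %/ ggcd s (k ^ s) n) * ggcd s (k ^ s) n)%N)%:R.
Proof.
move=> k0 s0 n0.
transitivity (\sum_(d <- divisors k) ((`|cr_int s n d|)%:~R : R[i])).
  apply: eq_big_seq => d; rewrite -dvdn_divisors // => dk.
  by rewrite cohen_ramanujan_int ?(dvdn_gt0 k0 dk) // intr_norm.
by rewrite -rmorph_sum sum_abs_cr_int // -pmulrn.
Qed.
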